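(* Let $D$ be a discrete space, $M$ a Hausdorff space and $\pi:D\to M$ a map. Then $D\cup_\pi M$ is countably pracompact if and only if $M$ is countably compact at some dense subset $A\subset M$ with $A\supset\pi(D)$.
   Context: For a discrete space $D$: if $D$ is infinite, $\alpha D=D\cup\{\infty\}$ denotes its one-point (Aleksandrov) compactification; if $D$ is finite, $\alpha D=D\cup\{\infty\}$ is the topological sum of $D$ and a singleton $\{\infty\}$ with $\infty\notin D$. For a map $\pi:D\to M$ into a $T_1$ space $M$, $D\cup_\pi M$ is the subspace $\{(x,\pi(x)):x\in D\}\cup(\{\infty\}\times M)$ of $\alpha D\times M$. A space $X$ is countably compact at a subset $A\subset X$ if every infinite subset $B\subset A$ has an accumulation point in $X$ (a point each neighborhood of which contains infinitely many points of $B$). A space $X$ is countably pracompact if it is countably compact at some dense subset of $X$. *)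

From Stdlib Require Import List Classical.
Set Implicit Arguments.

Definition finite_set {X : Type} (S : X -> Prop) : Prop :=
  exists l : list X, forall x, S x -> In x l.
Definition infinite_set {X : Type} (S : X -> Prop) : Prop := ~ finite_set S.
Definition finite_type (X : Type) : Prop := finite_set (fun _ : X => True).

Definition is_topology {X : Type} (opens : (X -> Prop) -> Prop) : Prop :=
  opens (fun _ => True) /\
  (forall U V, opens U -> opens V -> opens (fun x => U x /\ V x)) /\
  (forall F : (X -> Prop) -> Prop, (forall U, F U -> opens U) ->
      opens (fun x => exists U, F U /\ U x)).

Definition hausdorff {X : Type} (opens : (X -> Prop) -> Prop) : Prop :=
  forall x y : X, x <> y ->
    exists U V, opens U /\ opens V /\ U x /\ V y /\ (forall z, ~ (U z /\ V z)).

Definition dense {X : Type} (opens : (X -> Prop) -> Prop) (A : X -> Prop) : Prop :=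
  forall U, opens U -> (exists x, U x) -> exists a, A a /\ U a.

Definition accumulation_point {X : Type} (opens : (X -> Prop) -> Prop)
    (B : X -> Prop) (x : X) : Prop :=
  forall U, opens U -> U x -> infinite_set (fun b => B b /\ U b).

Definition countably_compact_at {X : Type} (opens : (X -> Prop) -> Prop)
    (A : X -> Prop) : Prop :=
  forall B : X -> Prop, (forall b, B b -> A b) -> infinite_set B ->
    exists x, accumulation_point opens B x.

Definition countably_pracompact {X : Type} (opens : (X -> Prop) -> Prop) : Prop :=
  exists A : X -> Prop, dense opens A /\ countably_compact_at opens A.

(* alpha D = D ∪ {∞}, with ∞ represented by None.  D carries the discrete topology.
   If D is infinite: one-point (Aleksandrov) compactification: every subset not
   containing ∞ is open, a set containing ∞ is open iff its complement is finite.
   If D is finite: topological sum of D and {∞}, i.e. every subset is open. *)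
Definition alpha_open (D : Type) (U : option D -> Prop) : Prop :=
  (finite_type D /\ True) \/
  (~ finite_type D /\ (U None -> finite_set (fun d : D => ~ U (Some d)))).

Definition prod_open {X Y : Type} (oX : (X -> Prop) -> Prop) (oY : (Y -> Prop) -> Prop)
    (W : X * Y -> Prop) : Prop :=
  forall p, W p -> exists U V, oX U /\ oY V /\ U (fst p) /\ V (snd p) /\
     (forall q, U (fst q) -> V (snd q) -> W q).

Definition subspace_open {X : Type} (oX : (X -> Prop) -> Prop) (S : X -> Prop)
    (W : {x : X | S x} -> Prop) : Prop :=
  exists O, oX O /\ forall s : {x : X | S x}, W s <-> O (proj1_sig s).

(* The underlying set of D ∪_π M inside alpha D × M:
   {(x, π x) : x ∈ D} ∪ ({∞} × M). *)
Definition glue_set {D M : Type} (pi : D -> M) (p : option D * M) : Prop :=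
  match fst p with
  | Some d => snd p = pi d
  | None => True
  end.

Definition glue_space {D M : Type} (pi : D -> M) : Type := {p : option D * M | glue_set pi p}.

Definition glue_open {D M : Type} (openM : (M -> Prop) -> Prop) (pi : D -> M) :
    (glue_space pi -> Prop) -> Prop :=
  subspace_open (prod_open (@alpha_open D) openM) (glue_set pi).
Arguments glue_open {D M} openM pi _.

From Stdlib Require Import List Classical ClassicalEpsilon.

(* Write p : D ∪_π M -> M for the projection onto the second factor; it is
   continuous and surjective, and the points d of D are isolated in D ∪_π M.
   (⇒) If D ∪_π M is countably compact at a dense set A', then A' contains every
   isolated point, so p(A') ⊇ π(D); and continuous surjections carry dense sets
   to dense sets and countable compactness at A' to countable compactness at
   p(A').  Hence A := p(A') works.
   (⇐) Take A' := p⁻¹(A).  It is dense because the points of D lie in A' and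
   every neighbourhood of a point ∞_m contains ∞_a for a ∈ A near m.  Given an
   infinite B ⊆ A', a pigeonhole refinement of countable compactness gives
   x ∈ M every neighbourhood of which contains p(b) for infinitely many b ∈ B;
   since a neighbourhood of ∞_x misses only finitely many points of D, ∞_x is
   an accumulation point of B. *)

Definition image {X Y : Type} (f : X -> Y) (S : X -> Prop) : Y -> Prop :=
  fun y => exists x, S x /\ f x = y.

Lemma finite_subset {X : Type} (S T : X -> Prop) :
  finite_set T -> (forall x, S x -> T x) -> finite_set S.
Proof. intros [l Hl] HST; exists l; auto. Qed.

Lemma finite_union {X : Type} (S T : X -> Prop) :
  finite_set S -> finite_set T -> finite_set (fun x => S x \/ T x).
Proof.
  intros [l1 H1] [l2 H2]; exists (l1 ++ l2).
  intros x [h|h]; apply in_or_app; auto.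
Qed.

Lemma finite_image {X Y : Type} (f : X -> Y) (S : X -> Prop) :
  finite_set S -> finite_set (image f S).
Proof.
  intros [l Hl]; exists (map f l).
  intros y [x [hx <-]]; apply in_map; auto.
Qed.

Lemma infinite_minus_finite {X : Type} (S T R : X -> Prop) :
  infinite_set S -> finite_set T -> (forall x, S x -> ~ T x -> R x) ->
  infinite_set R.
Proof.
  intros HS HT HR HRfin; apply HS.
  apply (finite_subset _ _ (finite_union _ _ HT HRfin)); intros x Sx.
  destruct (classic (T x)); [left | right; apply HR]; auto.
Qed.

Lemma infinite_fibre {X Y : Type} (S : X -> Prop) (h : X -> Y) (l : list Y) :
  infinite_set S -> (forall x, S x -> In (h x) l) ->
  exists y, infinite_set (fun x => S x /\ h x = y).
Proof.
  revert S; induction l as [|y l IH]; intros S HS Hl.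
  - exfalso; apply HS; exists nil; intros x hx; destruct (Hl x hx).
  - destruct (classic (infinite_set (fun x => S x /\ h x = y))) as [Hy|Hy]; [eauto|].
    apply NNPP in Hy.
    destruct (IH (fun x => S x /\ h x <> y)) as [y' Hy'].
    + apply (infinite_minus_finite _ _ _ HS Hy); intros x hx hne.
      split; [exact hx | intro e; apply hne; auto].
    + intros x [hx hne]; destruct (Hl x hx); [congruence | auto].
    + exists y'; intro Hfin; apply Hy'.
      apply (finite_subset _ _ Hfin); intros x [[hx _] e]; auto.
Qed.

Definition continuous {X Y : Type} (oX : (X -> Prop) -> Prop)
    (oY : (Y -> Prop) -> Prop) (f : X -> Y) : Prop :=
  forall V, oY V -> oX (fun x => V (f x)).

Section ContinuousImages.
Context {X Y : Type} {oX : (X -> Prop) -> Prop} {oY : (Y -> Prop) -> Prop}.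
Context {f : X -> Y} (f_cont : continuous oX oY f).

Lemma dense_image {A : X -> Prop} :
  (forall y, exists x, f x = y) -> dense oX A -> dense oY (image f A).
Proof.
  intros f_onto HA V HV [y Vy].
  destruct (f_onto y) as [x <-].
  destruct (HA _ (f_cont V HV) (ex_intro _ x Vy)) as [a [Aa Va]].
  exists (f a); split; [exists a; auto | exact Va].
Qed.

(* Countable compactness at A passes to countable compactness at f(A):
   lift an infinite B ⊆ f(A) injectively into A by a choice of preimages. *)
Lemma countably_compact_at_image {A : X -> Prop} :
  countably_compact_at oX A -> countably_compact_at oY (image f A).
Proof.
  intros HA B HB HBinf.
  destruct (classic (exists y, B y)) as [[y0 By0]|Bempty];
    [| exfalso; apply HBinf; exists nil; intros y By; apply Bempty; eauto].
  destruct (HB y0 By0) as [a0 _].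
  set (lift := fun y => epsilon (inhabits a0) (fun a => A a /\ f a = y)).
  assert (lift_spec : forall y, B y -> A (lift y) /\ f (lift y) = y).
  { intros y By; apply (epsilon_spec (inhabits a0) (fun a => A a /\ f a = y)).
    exact (HB y By). }
  destruct (HA (image lift B)) as [p Hp].
  - intros a [y [By <-]]; apply lift_spec, By.
  - intro Hfin; apply HBinf.
    apply (finite_subset _ _ (finite_image f _ Hfin)); intros y By.
    exists (lift y); split; [exists y; auto | apply lift_spec, By].
  - exists (f p); intros V HV Vfp HBVfin.
    apply (Hp _ (f_cont V HV) Vfp).
    apply (finite_subset _ _ (finite_image lift _ HBVfin)); intros a Ha.
    destruct Ha as [[y [By <-]] Vy].
    exists y; split; [split; [exact By|] | reflexivity].
    rewrite <- (proj2 (lift_spec y By)); exact Vy.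
Qed.

End ContinuousImages.

Lemma dense_contains_isolated {X : Type} (oX : (X -> Prop) -> Prop)
    (A U : X -> Prop) (x : X) :
  oX U -> U x -> (forall y, U y -> y = x) -> dense oX A -> A x.
Proof.
  intros HU Ux Uiso HA.
  destruct (HA U HU (ex_intro _ x Ux)) as [a [Aa Ua]].
  rewrite <- (Uiso a Ua); exact Aa.
Qed.

(* Countable compactness at A, for families: if g maps an infinite index set F
   into A, some x has infinitely many indices i ∈ F with g i in each of its
   neighbourhoods (an accumulation point of g(F), or a value taken infinitely often). *)
Lemma countably_compact_at_family {X I : Type} {oX : (X -> Prop) -> Prop}
    {A : X -> Prop} (g : I -> X) {F : I -> Prop} :
  countably_compact_at oX A -> (forall i, F i -> A (g i)) -> infinite_set F ->
  exists x, forall V, oX V -> V x -> infinite_set (fun i => F i /\ V (g i)).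
Proof.
  intros HA HgF HF.
  destruct (classic (infinite_set (image g F))) as [Himg|Himg].
  - destruct (HA (image g F)) as [x Hx]; [intros y [i [Fi <-]]; auto | exact Himg |].
    exists x; intros V HV Vx Hfin; apply (Hx V HV Vx).
    apply (finite_subset _ _ (finite_image g _ Hfin)); intros y Hy.
    destruct Hy as [[i [Fi <-]] Vgi]; exists i; auto.
  - apply NNPP in Himg; destruct Himg as [l Hl].
    destruct (infinite_fibre F g l HF) as [y Hy]; [intros i Fi; apply Hl; exists i; auto|].
    exists y; intros V HV Vy Hfin; apply Hy.
    apply (finite_subset _ _ Hfin); intros i Hi.
    destruct Hi as [Fi <-]; auto.
Qed.

Lemma alpha_nbhd_cofinite {D : Type} {U : option D -> Prop} :
  alpha_open U -> U None -> finite_set (fun d => ~ U (Some d)).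
Proof.
  intros [[[l Hl] _] | [_ Hcof]] UNone.
  - exists l; intros d _; apply Hl; trivial.
  - exact (Hcof UNone).
Qed.

Lemma alpha_open_full (D : Type) : alpha_open (fun _ : option D => True).
Proof.
  destruct (classic (finite_type D)); [left | right]; split; auto.
  intros _; exists nil; intros d nd; exfalso; apply nd; trivial.
Qed.

Section GluedSpace.
Context {D M : Type} {openM : (M -> Prop) -> Prop} {pi : D -> M}.

Definition glue_base (s : glue_space pi) : M := snd (proj1_sig s).
Definition glue_inf (m : M) : glue_space pi := exist (glue_set pi) (None, m) I.
Definition glue_pt (d : D) : glue_space pi := exist (glue_set pi) (Some d, pi d) eq_refl.

Lemma glue_cases (s : glue_space pi) :
  (exists m, s = glue_inf m) \/ (exists d, s = glue_pt d).
Proof.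
  destruct s as [[[d|] m] hs]; unfold glue_set in hs; simpl in hs.
  - right; exists d; subst m; reflexivity.
  - left; exists m; destruct hs; reflexivity.
Qed.

(* p is continuous (preimage of V is (alpha D × V) ∩ (D ∪_π M)) and onto. *)
Lemma glue_base_continuous : continuous (glue_open openM pi) openM glue_base.
Proof.
  intros V HV; exists (fun q => V (snd q)); split; [|tauto].
  intros q Vq; exists (fun _ => True), V; repeat split; auto using alpha_open_full.
Qed.

Lemma glue_base_onto (m : M) : exists s, glue_base s = m.
Proof. exists (glue_inf m); reflexivity. Qed.

(* The points of D are isolated, hence lie in every dense subset. *)
Lemma glue_pt_in_dense (HtopM : is_topology openM) {A' : glue_space pi -> Prop} (d : D) :
  dense (glue_open openM pi) A' -> A' (glue_pt d).
Proof.
  apply dense_contains_isolated with (U := fun s => fst (proj1_sig s) = Some d);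
    [| reflexivity |].
  - exists (fun q => fst q = Some d); split; [|tauto].
    intros q qd; exists (fun o => o = Some d), (fun _ => True).
    repeat split; auto; [| exact (proj1 HtopM)].
    destruct (classic (finite_type D)); [left | right]; split; auto.
    intro e; discriminate.
  - intros s sd; destruct (glue_cases s) as [[m ->]|[d' ->]]; [discriminate|].
    simpl in sd; congruence.
Qed.

Lemma glue_inf_nbhd {W : glue_space pi -> Prop} {m : M} :
  glue_open openM pi W -> W (glue_inf m) ->
  exists V C, openM V /\ V m /\ finite_set C /\
    forall s, V (glue_base s) -> (forall d, C d -> s <> glue_pt d) -> W s.
Proof.
  intros [O [HO HW]] Wm.
  destruct (HO _ (proj1 (HW _) Wm)) as [U [V [HU [HV [UNone [Vm Hrect]]]]]].
  exists V, (fun d => ~ U (Some d)); repeat split; auto.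
  - exact (alpha_nbhd_cofinite HU UNone).
  - intros s Vs Hs; apply HW, Hrect; [| exact Vs].
    destruct (glue_cases s) as [[m' ->]|[d ->]]; [exact UNone|].
    apply NNPP; intro nUd; exact (Hs d nUd eq_refl).
Qed.

Context {A : M -> Prop}.

Lemma glue_preimage_dense (A_pi : forall d, A (pi d)) :
  dense openM A -> dense (glue_open openM pi) (fun s => A (glue_base s)).
Proof.
  intros HA W HW [s Ws].
  destruct (glue_cases s) as [[m ->]|[d ->]];
    [| exists (glue_pt d); split; [apply A_pi | exact Ws]].
  destruct (glue_inf_nbhd HW Ws) as [V [C [HV [Vm [_ HVW]]]]].
  destruct (HA V HV (ex_intro _ m Vm)) as [a [Aa Va]].
  exists (glue_inf a); split; [exact Aa|].
  apply HVW; [exact Va | intros d _; discriminate].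
Qed.

(* If M is countably compact at A, then D ∪_π M is countably compact at p⁻¹(A):
   a point x given by countably_compact_at_family yields the accumulation point ∞_x. *)
Lemma glue_preimage_countably_compact_at :
  countably_compact_at openM A ->
  countably_compact_at (glue_open openM pi) (fun s => A (glue_base s)).
Proof.
  intros HA B HB HBinf.
  destruct (countably_compact_at_family glue_base HA HB HBinf) as [x Hx].
  exists (glue_inf x); intros W HW Wx.
  destruct (glue_inf_nbhd HW Wx) as [V [C [HV [Vx [HC HVW]]]]].
  apply (infinite_minus_finite _ _ _ (Hx V HV Vx) (finite_image glue_pt _ HC)).
  intros s [Bs Vs] Hs; split; [exact Bs|].
  apply HVW; [exact Vs | intros d Cd ->; apply Hs; exists d; auto].
Qed.

End GluedSpace.

Theorem proposition1p6 (D M : Type) (openM : (M -> Prop) -> Prop)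
  (HtopM : is_topology openM) (HhausM : hausdorff openM) (pi : D -> M) :
  countably_pracompact (glue_open openM pi) <->
  exists A : M -> Prop,
    dense openM A /\ (forall d : D, A (pi d)) /\ countably_compact_at openM A.
Proof.
  split.
  - intros [A' [HA'dense HA'cc]].
    pose proof (glue_base_continuous (openM := openM) (pi := pi)) as Hcont.
    exists (image glue_base A'); split; [|split].
    + exact (dense_image Hcont glue_base_onto HA'dense).
    + intro d; exists (glue_pt d).
      split; [exact (glue_pt_in_dense HtopM d HA'dense) | reflexivity].
    + exact (countably_compact_at_image Hcont HA'cc).
  - intros [A [HAdense [HApi HAcc]]].
    exists (fun s => A (glue_base s)); split.
    + exact (glue_preimage_dense HApi HAdense).
    + exact (glue_preimage_countably_compact_at (pi := pi) HAcc).
Qed.
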